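(* Let $\psi:\mathbb{N}^*\to\mathbb{N}^*\sqcup\mathcal{A}$ be a function such that for every $n\ge1$ either $\psi(n)\in\mathcal{A}$ or $1\le\psi(n)\le n-1$, and let $(\pi_i)_{i\ge1}$ and $w_\psi$ be the associated palindromes and infinite word. Then the following are equivalent: (a) $\psi$ is reduced; (b) the palindromic prefixes of $w_\psi$ are exactly the words $\pi_i$, $i\ge1$.
   Context: $\mathcal{A}$ is an alphabet (finite or infinite) disjoint from $\mathbb{N}^*=\{1,2,\dots\}$; the empty word $\varepsilon$ is a palindrome. Associated words: $\pi_1=\varepsilon$ and, for $i\ge1$: if $\psi(i)\in\mathcal{A}$, $\pi_{i+1}=\pi_i\,\psi(i)\,\pi_i$; if $\psi(i)\in\mathbb{N}^*$, then $\pi_{\psi(i)}$ is a prefix of $\pi_i$, and writing $\pi_i=\pi_{\psi(i)}b_i$, $\pi_{i+1}=\pi_ib_i$. Each $\pi_i$ is a palindrome and a proper prefix of $\pi_{i+1}$; $w_\psi$ is the infinite word having all $\pi_i$ as prefixes. Let $(t_k)_{k\ge0}$ be the (finite or infinite) family, in increasing order, of all $n\ge1$ such that either $\psi(n)\in\mathcal{A}$ or $1\le\psi(n)\le n-2$ (so $t_0=1$). $\psi$ is reduced if for every $k\ge1$ such that $t_k$ exists: $\psi(t_k)\ne\psi(t_{k-1})$, and either $\psi(t_k)\in\mathcal{A}$ or $\psi(t_k)<t_{k-1}$. *)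

From mathcomp Require Import all_boot.
Set Implicit Arguments. Unset Strict Implicit. Unset Printing Implicit Defensive.

(* psi : N* -> N* + A is represented as  nat -> A + nat ; the value at 0 is
   irrelevant, inl a means psi n = a in the alphabet, inr m means psi n = m in N*. *)

Section Pal.
Variable A : Type.
Variable psi : nat -> A + nat.

Definition psi_ok : Prop :=
  forall n, 1 <= n -> (exists a, psi n = inl a) \/
                      (exists m, psi n = inr m /\ 1 <= m <= n.-1).

Definition pi_step (i : nat) (L : seq (seq A)) : seq A :=
  let p := nth [::] L i.-1 in
  match psi i with
  | inl a => p ++ a :: p
  | inr m => p ++ drop (size (nth [::] L m.-1)) p   (* pi_i = pi_m b_i, pi_{i+1} = pi_i b_i *)
  end.

(* pilist n = [pi_1; ...; pi_{n+1}] *)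
Fixpoint pilist (n : nat) : seq (seq A) :=
  match n with
  | 0 => [:: [::]]
  | n'.+1 => let L := pilist n' in rcons L (pi_step n L)
  end.

Definition palpi (i : nat) : seq A := nth [::] (pilist i.-1) i.-1.

Definition palindrome (u : seq A) : Prop := rev u = u.

Definition prefix_of (u : seq A) (w : nat -> A) : Prop := u = mkseq w (size u).

Definition inT (n : nat) : Prop :=
  1 <= n /\ ((exists a, psi n = inl a) \/ (exists m, psi n = inr m /\ 1 <= m <= n - 2)).

(* psi reduced: for consecutive terms t_{k-1} = s < t = t_k of the family (t_k),
   psi(t) <> psi(s) and (psi(t) in A or psi(t) < s). *)
Definition reduced : Prop :=
  forall s t, inT s -> inT t -> s < t -> (forall m, s < m < t -> ~ inT m) ->
    psi t <> psi s /\
    ((exists a, psi t = inl a) \/ (exists m, psi t = inr m /\ m < s)).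
End Pal.

(* Write L_i = |pi_i| and d_i = L_(i+1) - L_i.  Every pi_i is a palindrome, so pi_(i+1), a
   palindrome with palindromic prefix pi_i, has period d_i; and a palindromic prefix of w of
   length n with L_t < n < L_(t+1) exists exactly when pi_(t+1) has a period shorter than d_t.
   Hence (b) says that d_t is the least period of pi_(t+1) for every t >= 1.
   Between two consecutive terms s < t of (t_k) we have psi(n) = n - 1, so d stays equal to
   p = d_s on [s, t) and pi_t has period p.  If psi(t) = psi(s), or psi(t) is a number >= s,
   then d_t is a proper multiple of p and pi_(t+1) inherits the period p, so d_t is not least.
   Conversely, if pi_(t+1) had a period shorter than d_t, the Fine-Wilf theorem would make the
   least period p of pi_t a period of pi_(t+1) dividing d_t; comparing lengths, this forces
   psi(t) = psi(s) or contradicts the least-period property at s. *)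

From mathcomp Require Import all_boot zify.
Set Implicit Arguments. Unset Strict Implicit. Unset Printing Implicit Defensive.

Lemma dvdn_lt_double x p : 0 < x -> p %| x -> x < p.*2 -> x = p.
Proof.
move=> x_gt0 /dvdnP[k def_x]; move: x_gt0; rewrite {x}def_x.
by case: k => [|[|k]]; rewrite ?mulSn; lia.
Qed.

Section Periods.
Variables (A : Type) (w : nat -> A).

Definition has_period n p := forall k, k + p < n -> w k = w (k + p).
Definition pal_prefix n := forall k, k < n -> w (n - k.+1) = w k.
Definition no_period_below n p := forall r, 0 < r -> r < p -> ~ has_period n r.

Lemma has_period_le n n' p : n' <= n -> has_period n p -> has_period n' p.
Proof. by move=> le_n'n per_p k lt_k; apply: per_p; lia. Qed.

Lemma has_period_mul n p c k : has_period n p -> k + c * p < n -> w k = w (k + c * p).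
Proof.
move=> per_p; elim: c => [|c IHc] lt_k; first by rewrite addn0.
rewrite IHc; last by lia.
by rewrite per_p; [congr w | ]; lia.
Qed.

Lemma has_period_snoc n p :
  p <= n -> w n = w (n - p) -> has_period n p -> has_period n.+1 p.
Proof.
move=> le_pn wn per_p k lt_k; have [lt_kn | ge_kn] := ltnP (k + p) n.
  exact: per_p.
have -> : k + p = n by lia.
by rewrite wn; congr w; lia.
Qed.

Lemma pal_prefix_period n m :
  pal_prefix n -> pal_prefix m -> m <= n -> has_period n (n - m).
Proof.
move=> pal_n pal_m le_mn k lt_k.
rewrite -pal_m; last by lia.
rewrite -(pal_n (k + (n - m))); last by lia.
congr w; lia.
Qed.

Lemma period_pal_prefix n r :
  pal_prefix n -> has_period n r -> r <= n -> pal_prefix (n - r).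
Proof.
move=> pal_n per_r le_rn k lt_k.
rewrite -(pal_n (n - r - k.+1)); last by lia.
rewrite [RHS]per_r; last by lia.
congr w; lia.
Qed.

Lemma pal_prefix_center n :
  pal_prefix n -> (forall k, k < n -> w (n + 1 + k) = w k) -> pal_prefix n.*2.+1.
Proof.
move=> pal_n copy k lt_k; case: (ltngtP k n) => [lt_kn | gt_kn | ->].
- have -> : n.*2.+1 - k.+1 = n + 1 + (n - k.+1) by lia.
  by rewrite copy; [exact: pal_n | lia].
- have -> : n.*2.+1 - k.+1 = n - (k - n - 1).+1 by lia.
  rewrite pal_n; last by lia.
  rewrite -copy; [congr w | ]; lia.
- by congr w; lia.
Qed.

Lemma pal_prefix_rep n m :
  pal_prefix n -> pal_prefix m -> m <= n ->
  (forall e, e < n - m -> w (n + e) = w (m + e)) -> pal_prefix (n + (n - m)).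
Proof.
move=> pal_n pal_m le_mn copy.
have per : has_period (n + (n - m)) (n - m).
  move=> k lt_k; have [lt_kn | ge_kn] := ltnP (k + (n - m)) n.
    rewrite -(pal_n (k + (n - m))); last by lia.
    by rewrite -(pal_m k); [congr w | ]; lia.
  have -> : k + (n - m) = n + (k + (n - m) - n) by lia.
  by rewrite copy; [congr w | ]; lia.
move=> k lt_k; have [lt_k' | ge_k'] := ltnP (n + (n - m) - k.+1) (n - m).
- have -> : k = n + (k - n) by lia.
  rewrite copy; last by lia.
  by rewrite -(pal_n (m + (k - n))); [congr w | ]; lia.
- have -> : n + (n - m) - k.+1 = n - k.+1 + (n - m) by lia.
  by rewrite -per; [apply: pal_n | ]; lia.
Qed.

Lemma has_period_sub n p q :
  has_period n p -> has_period n q -> p < q -> p + q <= n -> has_period n (q - p).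
Proof.
move=> per_p per_q lt_pq le_n k lt_k; have [lt_kq | ge_kq] := ltnP (k + q) n.
  by rewrite per_q // (per_p (k + (q - p))); [congr w | ]; lia.
transitivity (w (k - p)); first by rewrite (per_p (k - p)); [congr w | ]; lia.
by rewrite (per_q (k - p)); [congr w | ]; lia.
Qed.

Lemma fine_wilf_gcd n p q :
  has_period n p -> has_period n q -> 0 < p -> 0 < q -> p + q <= n ->
  has_period n (gcdn p q).
Proof.
have [s] := ubnP (p + q); elim: s p q => // s IHs p q lt_s.
wlog le_pq : p q lt_s / p <= q.
  move=> gen; have [|lt_qp] := leqP p q; first exact: gen.
  by move=> *; rewrite gcdnC; apply: gen => //; lia.
move=> per_p per_q p_gt0 q_gt0 le_n.
case: (ltngtP p q) => [lt_pq | | <-]; [ | lia | by rewrite gcdnn].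
rewrite -(subnK (ltnW lt_pq)) gcdnDr.
apply: IHs; rewrite ?subn_gt0 //; [lia | exact: has_period_sub | lia].
Qed.

Lemma has_period_dvd_extend N P n q :
  has_period N P -> has_period n q -> 0 < P -> P <= n -> n <= N -> q %| P ->
  has_period N q.
Proof.
move=> per_P per_q P_gt0 le_Pn le_nN /dvdnP[c def_P] k.
elim/ltn_ind: k => k IHk lt_k.
have [|ge_n] := ltnP (k + q) n; first exact: per_q.
have [lt_kP | ge_kP] := ltnP k P.
- have def_k : k = k + q - P + c.-1 * q by case: c def_P; lia.
  rewrite {1}def_k -(has_period_mul (k := k + q - P) per_q); last by lia.
  by rewrite (per_P (k + q - P)); [congr w | ]; lia.
- transitivity (w (k - P)); first by rewrite (per_P (k - P)); [congr w | ]; lia.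
  rewrite (IHk (k - P)); try lia.
  by rewrite (per_P (k - P + q)); [congr w | ]; lia.
Qed.

Lemma least_period_dvd n p q :
  has_period n p -> no_period_below n p -> has_period n q -> 0 < p -> 0 < q ->
  p.*2 <= n.+1 -> q.*2 <= n.+1 -> p %| q.
Proof.
move=> per_p least_p per_q p_gt0 q_gt0 le_p le_q.
have le_pq : p <= q by rewrite leqNgt; apply/negP => lt_qp; exact: least_p lt_qp per_q.
have [le_n | gt_n] := leqP (p + q) n; last by have -> : q = p by lia.
have g_gt0 : 0 < gcdn p q by rewrite gcdn_gt0 p_gt0.
have [lt_gp | ge_gp] := ltnP (gcdn p q) p.
  by case: (least_p _ g_gt0 lt_gp); apply: fine_wilf_gcd.
have -> : p = gcdn p q by apply/eqP; rewrite eqn_leq ge_gp dvdn_leq ?dvdn_gcdl.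
exact: dvdn_gcdr.
Qed.

Lemma least_period_dvd_short N n d r p :
  has_period N d -> has_period N r -> 0 < r -> r < d -> d.*2 <= N.+1 ->
  d <= n.+1 -> n <= N ->
  has_period n p -> no_period_below n p -> 0 < p -> p.*2 <= n.+1 ->
  has_period N p /\ p %| d.
Proof.
move=> per_d per_r r_gt0 lt_rd le_dN le_dn le_nN per_p least_p p_gt0 le_pn.
have g_gt0 : 0 < gcdn r d by rewrite gcdn_gt0 r_gt0.
have g_dvd : gcdn r d %| d := dvdn_gcdr r d.
have le_gd : (gcdn r d).*2 <= d.
  have le_gr : gcdn r d <= r by apply: dvdn_leq; rewrite ?dvdn_gcdl.
  rewrite leqNgt; apply/negP => lt_d.
  by have := dvdn_lt_double (ltn_trans r_gt0 lt_rd) g_dvd lt_d; lia.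
have per_g : has_period N (gcdn r d) by apply: fine_wilf_gcd => //; lia.
have p_dvd : p %| gcdn r d.
  by apply: (least_period_dvd per_p) => //; [exact: has_period_le per_g | lia].
split; last exact: dvdn_trans p_dvd g_dvd.
by apply: (has_period_dvd_extend per_g per_p) => //; lia.
Qed.

Lemma palindrome_mkseqP n : palindrome (mkseq w n) <-> pal_prefix n.
Proof.
rewrite /palindrome; split=> [E k lt_k | pal_n].
  have := congr1 (nth (w 0) ^~ k) E.
  by rewrite nth_rev size_mkseq // !nth_mkseq //; lia.
apply: (eq_from_nth (x0 := w 0)); rewrite size_rev // size_mkseq => k lt_k.
by rewrite nth_rev size_mkseq // !nth_mkseq ?pal_n //; lia.
Qed.

End Periods.

Lemma prefix_of_nth (A : Type) (u : seq A) (w : nat -> A) x0 k :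
  prefix_of u w -> k < size u -> nth x0 u k = w k.
Proof. by move=> ->; rewrite size_mkseq; apply: nth_mkseq. Qed.

Section Construction.
Variables (A : Type) (psi : nat -> A + nat).

Lemma size_pilist n : size (pilist psi n) = n.+1.
Proof. by elim: n => //= n IHn; rewrite size_rcons IHn. Qed.

Lemma nth_pilist n j : j <= n -> nth [::] (pilist psi n) j = palpi psi j.+1.
Proof.
elim: n => [|n IHn]; first by rewrite leqn0 => /eqP->.
rewrite leq_eqVlt => /orP[/eqP-> // | lt_jn].
by rewrite /= nth_rcons size_pilist lt_jn IHn.
Qed.

Lemma palpiS i : 1 <= i -> palpi psi i.+1 = pi_step psi i (pilist psi i.-1).
Proof. by case: i => // i _; rewrite /palpi /= nth_rcons size_pilist ltnn eqxx. Qed.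

Lemma palpi_letter i a :
  1 <= i -> psi i = inl a -> palpi psi i.+1 = palpi psi i ++ a :: palpi psi i.
Proof. by move=> i_gt0 psi_i; rewrite palpiS // /pi_step psi_i nth_pilist ?prednK. Qed.

Lemma palpi_rep i m : 1 <= i -> psi i = inr m -> 1 <= m <= i ->
  palpi psi i.+1 = palpi psi i ++ drop (size (palpi psi m)) (palpi psi i).
Proof.
move=> i_gt0 psi_i /andP[m_gt0 le_mi]; rewrite palpiS // /pi_step psi_i.
by rewrite !nth_pilist ?prednK //; lia.
Qed.

Definition plen i := size (palpi psi i).
Definition pdiff i := plen i.+1 - plen i.

Lemma plen1 : plen 1 = 0.
Proof. by []. Qed.

Lemma plen_letter i a : 1 <= i -> psi i = inl a -> plen i.+1 = (plen i).*2.+1.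
Proof. by move=> i_gt0 psi_i; rewrite /plen (palpi_letter i_gt0 psi_i) size_cat /=; lia. Qed.

Lemma plen_rep i m : 1 <= i -> psi i = inr m -> 1 <= m <= i ->
  plen i.+1 = plen i + (plen i - plen m).
Proof. by move=> *; rewrite /plen (palpi_rep (m := m)) // size_cat size_drop. Qed.

Hypothesis ok_psi : psi_ok psi.

Lemma plen_lt i j : 1 <= i -> i < j -> plen i < plen j.
Proof.
elim: j i => // j IHj i i_gt0 lt_ij.
have lt_j : plen j < plen j.+1.
  have j_gt0 : 1 <= j by lia.
  case: (ok_psi j_gt0) => [[a psi_j] | [m [psi_j m_range]]].
    by rewrite (plen_letter j_gt0 psi_j); lia.
  have := IHj m ltac:(lia) ltac:(lia).
  by rewrite (plen_rep j_gt0 psi_j) //; lia.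
have [-> // | ne_ij] := eqVneq i j.
by apply: (ltn_trans (IHj i i_gt0 _) lt_j); lia.
Qed.

Lemma plen_ltn i j : 1 <= i -> 1 <= j -> (plen i < plen j) = (i < j).
Proof.
move=> i_gt0 j_gt0; apply/idP/idP; last exact: plen_lt.
by apply: contraLR; rewrite -!leqNgt leq_eqVlt => /orP[/eqP-> // | /(plen_lt j_gt0)/ltnW].
Qed.

Lemma plen_inj i j : 1 <= i -> 1 <= j -> plen i = plen j -> i = j.
Proof.
move=> i_gt0 j_gt0 eq_ij; case: (ltngtP i j) => // [lt_ij | lt_ji].
  by have := plen_lt i_gt0 lt_ij; rewrite eq_ij ltnn.
by have := plen_lt j_gt0 lt_ji; rewrite eq_ij ltnn.
Qed.

Lemma plen_bracket n : exists2 t, 1 <= t & plen t <= n < plen t.+1.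
Proof.
elim: n => [|n [t t_gt0 /andP[le_t lt_t]]]; first by exists 1; last exact: (@plen_lt 1 2).
have [lt_n | ge_n] := ltnP n.+1 (plen t.+1).
  by exists t => //; rewrite lt_n andbT; lia.
by exists t.+1 => //; have := @plen_lt t.+1 t.+2; lia.
Qed.

Lemma pdiff_gt0 i : 1 <= i -> 0 < pdiff i.
Proof. by move=> i_gt0; rewrite subn_gt0 plen_lt. Qed.

Lemma pdiff_le i : 1 <= i -> pdiff i <= (plen i).+1.
Proof.
move=> i_gt0; rewrite /pdiff; case: (ok_psi i_gt0) => [[a psi_i] | [m [psi_i m_range]]].
  by rewrite (plen_letter i_gt0 psi_i); lia.
by rewrite (plen_rep i_gt0 psi_i); lia.
Qed.

End Construction.

Section Family.
Variables (A : Type) (psi : nat -> A + nat).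
Hypothesis ok_psi : psi_ok psi.

Definition reduced_pair s t :=
  psi t <> psi s /\ ((exists a, psi t = inl a) \/ (exists m, psi t = inr m /\ m < s)).

Lemma inT_dec n : inT psi n \/ ~ inT psi n.
Proof.
rewrite /inT; case: (psi n) => [a | m].
  by case: (ltnP 0 n) => [n_gt0 | n0]; [left; split=> //; left; exists a | right; case; lia].
have [/andP[n_gt0 m_range] | notT] := boolP ((0 < n) && (1 <= m <= n - 2)).
  by left; split=> //; right; exists m.
right=> -[n_gt0 [[a //] | [m' [[eq_m] m_range]]]].
by move: notT; rewrite n_gt0 eq_m m_range.
Qed.

Lemma inT_inr n m : inT psi n -> psi n = inr m -> 1 <= m /\ m + 2 <= n.
Proof. by move=> [n_gt0 [[a ->] // | [m' [-> m_range]] [<-]]]; lia. Qed.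

Lemma inT1 : inT psi 1.
Proof. by split=> //; case: (ok_psi (ltnSn 0)) => [? | [m [_ ?]]]; [left | lia]. Qed.

Lemma psi_notinT n : 2 <= n -> ~ inT psi n -> psi n = inr n.-1.
Proof.
move=> n_ge2 notT; case: (ok_psi (ltnW n_ge2)) => [[a psi_n] | [m [psi_n m_range]]].
  by case: notT; split; [lia | left; exists a].
have [le_m | gt_m] := leqP m (n - 2).
  by case: notT; split; [lia | right; exists m; split=> //; lia].
by rewrite psi_n; congr inr; lia.
Qed.

Lemma inT_pred t : 2 <= t ->
  exists s, [/\ inT psi s, s < t & forall n, s < n < t -> ~ inT psi n].
Proof.
elim: t => // t IHt t_ge1; have [t1 | t_ge2] := ltnP t 2.
  by exists 1; split; [exact: inT1 | lia | lia].
case: (inT_dec t) => [Tt | notTt]; first by exists t; split=> //; lia.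
have [s [Ts lt_st gap]] := IHt t_ge2; exists s; split=> //; first by lia.
move=> n /andP[lt_sn]; rewrite ltnS leq_eqVlt => /orP[/eqP-> // | lt_nt].
by apply: gap; rewrite lt_sn.
Qed.

Lemma pdiff_pred n : 2 <= n -> psi n = inr n.-1 -> pdiff psi n = pdiff psi n.-1.
Proof.
move=> n_ge2 psi_n; rewrite /pdiff (plen_rep (ltnW n_ge2) psi_n) ?prednK //; lia.
Qed.

Section BlockLengths.
Variables s t : nat.
Hypotheses (Ts : inT psi s) (lt_st : s < t) (gap : forall n, s < n < t -> ~ inT psi n).

Lemma block_pdiff n : s <= n < t -> pdiff psi n = pdiff psi s.
Proof.
elim: n => [|n IHn] /andP[le_sn lt_nt]; first by case: Ts; lia.
have [-> // | lt_sn] := eqVneq s n.+1.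
have n_ge2 : 2 <= n.+1 by case: Ts; lia.
rewrite (pdiff_pred n_ge2) ?IHn //; first by lia.
by apply: psi_notinT => //; apply: gap; lia.
Qed.

Lemma block_plen n : s <= n <= t -> plen psi n = plen psi s + (n - s) * pdiff psi s.
Proof.
elim: n => [|n IHn] /andP[le_sn le_nt]; first by case: Ts; lia.
have [-> | lt_sn] := eqVneq s n.+1; first by rewrite subnn mul0n addn0.
have step : plen psi n.+1 = plen psi n + pdiff psi s.
  rewrite -(block_pdiff (n := n)); last by lia.
  by rewrite /pdiff subnKC // ltnW // (plen_lt ok_psi); case: Ts; lia.
rewrite step IHn; last by lia.
have -> : n.+1 - s = (n - s).+1 by lia.
by rewrite mulSn; lia.
Qed.

End BlockLengths.
End Family.

Section Word.
Variables (A : Type) (psi : nat -> A + nat) (w : nat -> A).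
Hypotheses (ok_psi : psi_ok psi) (pi_prefix : forall i, 1 <= i -> prefix_of (palpi psi i) w).

Local Notation L := (plen psi).
Local Notation d := (pdiff psi).

Lemma nth_palpi i x0 k : 1 <= i -> k < L i -> nth x0 (palpi psi i) k = w k.
Proof. by move=> i_gt0; apply: prefix_of_nth; exact: pi_prefix. Qed.

Lemma word_letter i a : 1 <= i -> psi i = inl a ->
  w (L i) = a /\ forall k, k < L i -> w (L i + 1 + k) = w k.
Proof.
move=> i_gt0 psi_i; have lenS := plen_letter i_gt0 psi_i.
have nthS k : k < L i.+1 -> nth a (palpi psi i ++ a :: palpi psi i) k = w k.
  by rewrite -(palpi_letter i_gt0 psi_i); apply: nth_palpi.
split=> [|k lt_k].
  by rewrite -nthS ?lenS; [rewrite nth_cat /plen ltnn subnn | lia].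
rewrite -nthS ?lenS; last by lia.
rewrite nth_cat /plen ifN; last by lia.
by rewrite -addnA addKn add1n /=; apply: nth_palpi.
Qed.

Lemma word_rep i m : 1 <= i -> psi i = inr m -> 1 <= m <= i ->
  forall e, e < L i - L m -> w (L i + e) = w (L m + e).
Proof.
move=> i_gt0 psi_i m_range e lt_e; have lenS := plen_rep i_gt0 psi_i m_range.
rewrite -(nth_palpi (w 0) (ltn0Sn i)); last by rewrite lenS; lia.
rewrite (palpi_rep i_gt0 psi_i m_range) nth_cat /plen ifN; last by lia.
rewrite addKn nth_drop.
by apply: nth_palpi; rewrite /plen in lt_e *; lia.
Qed.

Lemma pal_prefix_plen i : 1 <= i -> pal_prefix w (L i).
Proof.
elim/ltn_ind: i => -[// | i] IHi _.
have [-> | i_gt0] := posnP i; first by move=> k; rewrite plen1.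
case: (ok_psi i_gt0) => [[a psi_i] | [m [psi_i m_range]]].
  rewrite (plen_letter i_gt0 psi_i); apply: pal_prefix_center; first exact: IHi.
  exact: (word_letter i_gt0 psi_i).2.
have m_range' : 1 <= m <= i by lia.
rewrite (plen_rep i_gt0 psi_i m_range'); apply: pal_prefix_rep.
- exact: IHi.
- by apply: IHi; lia.
- by apply/ltnW/(plen_lt ok_psi); lia.
- exact: word_rep.
Qed.

Lemma has_period_pdiff i : 1 <= i -> has_period w (L i.+1) (d i).
Proof.
move=> i_gt0; apply: pal_prefix_period; try exact: pal_prefix_plen.
exact/ltnW/(plen_lt ok_psi).
Qed.

Definition least_pdiff t := no_period_below w (L t.+1) (d t).

Lemma pal_prefixes_least :
  (forall u, palindrome u /\ prefix_of u w <-> exists2 i, 1 <= i & u = palpi psi i) <->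
  (forall t, 1 <= t -> least_pdiff t).
Proof.
split=> [pal_pi t t_gt0 r r_gt0 lt_r per_r | least u].
  rewrite /pdiff in lt_r.
  have le_r : r <= L t.+1 by lia.
  have pal_n := period_pal_prefix (pal_prefix_plen (ltn0Sn t)) per_r le_r.
  have [|i i_gt0 def_u] := (pal_pi (mkseq w (L t.+1 - r))).1.
    by split; [exact/palindrome_mkseqP | rewrite /prefix_of size_mkseq].
  have Li : L i = L t.+1 - r by rewrite /plen -def_u size_mkseq.
  have lt_ti : t < i by rewrite -(plen_ltn ok_psi t_gt0 i_gt0) Li; lia.
  have lt_it : i < t.+1 by rewrite -(plen_ltn ok_psi i_gt0 (ltn0Sn t)) Li; lia.
  by lia.
split=> [[pal_u pre_u] | [i i_gt0 ->]]; last first.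
  split; last exact: pi_prefix.
  by rewrite (pi_prefix i_gt0); exact/palindrome_mkseqP/pal_prefix_plen.
have [t t_gt0 /andP[le_t lt_t]] := plen_bracket ok_psi (size u).
have [lt_u | eq_u] := ltnP (L t) (size u); last first.
  have eq_size : size u = L t by apply/eqP; rewrite eqn_leq eq_u le_t.
  by exists t => //; rewrite pre_u (pi_prefix t_gt0) eq_size.
case: (least t t_gt0 (L t.+1 - size u)); rewrite /pdiff; try lia.
apply: pal_prefix_period (pal_prefix_plen (ltn0Sn t)) _ (ltnW lt_t).
by apply/palindrome_mkseqP; rewrite -pre_u.
Qed.

Lemma least_pdiff1 : least_pdiff 1.
Proof.
move=> r r_gt0; case: (ok_psi (ltnSn 0)) => [[a psi_1] | [m [_ m_range]]]; last by lia.
by rewrite /pdiff (plen_letter (ltnSn 0) psi_1) plen1; lia.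
Qed.

Lemma least_pdiff_pred t : 2 <= t -> psi t = inr t.-1 -> least_pdiff t.-1 -> least_pdiff t.
Proof.
move=> t_ge2 psi_t least_pred r r_gt0; rewrite (pdiff_pred t_ge2 psi_t) => lt_r per_r.
apply: least_pred r_gt0 lt_r _; rewrite prednK; last by lia.
by apply: has_period_le per_r; apply/ltnW/(plen_lt ok_psi); lia.
Qed.

Lemma least_pdiff_no_divisor_period t n p : 1 <= t -> least_pdiff t ->
  has_period w n p -> 0 < p -> p < d t -> p %| d t -> d t <= n <= L t.+1 -> False.
Proof.
move=> t_gt0 least_t per_p p_gt0 lt_p dvd_p /andP[le_n le_n'].
apply: least_t p_gt0 lt_p _; apply: (has_period_dvd_extend (has_period_pdiff t_gt0) per_p) => //.
exact: pdiff_gt0.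
Qed.

Lemma least_pdiff_rep s m : inT psi s -> psi s = inr m -> least_pdiff s -> (L s).+1 < (d s).*2.
Proof.
move=> Ts psi_s least_s; have [m_gt0 m_le] := inT_inr Ts psi_s.
have s_gt0 : 1 <= s by lia.
have Ls := plen_rep s_gt0 psi_s (ltac:(lia) : 1 <= m <= s).
have lt_m := plen_lt ok_psi m_gt0 (ltac:(lia) : m < s.-1).
have lt_pred := plen_lt ok_psi (ltac:(lia) : 1 <= s.-1) (ltac:(lia) : s.-1 < s).
have per_q : has_period w (L s) (d s.-1).
  by have := has_period_pdiff (i := s.-1); rewrite prednK //; apply; lia.
have per_d : has_period w (L s) (d s).
  by apply: has_period_le (has_period_pdiff s_gt0); rewrite Ls leq_addr.
have lt_q : d s.-1 < d s by rewrite /pdiff prednK // Ls; lia.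
rewrite ltnNge; apply/negP => short.
have per_g := fine_wilf_gcd per_q per_d (pdiff_gt0 ok_psi (ltac:(lia) : 1 <= s.-1))
  (pdiff_gt0 ok_psi s_gt0) (ltac:(lia)).
apply: (least_s (gcdn (d s.-1) (d s))).
- by rewrite gcdn_gt0 pdiff_gt0 //; lia.
- apply: leq_ltn_trans lt_q; apply: dvdn_leq; rewrite ?dvdn_gcdl ?pdiff_gt0 //; lia.
- apply: (has_period_dvd_extend (has_period_pdiff s_gt0) per_g); rewrite ?dvdn_gcdr //.
  + exact: pdiff_gt0.
  + by rewrite /pdiff Ls; lia.
  + by rewrite Ls leq_addr.
Qed.

Section BlockPeriods.
Variables s t : nat.
Hypotheses (Ts : inT psi s) (lt_st : s < t) (gap : forall n, s < n < t -> ~ inT psi n).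

Let s_gt0 : 0 < s. Proof. by case: Ts. Qed.
Let t_gt0 : 0 < t. Proof. exact: leq_ltn_trans lt_st. Qed.

Let block_pdiff_pred : d t.-1 = d s.
Proof. by apply: (block_pdiff ok_psi Ts lt_st gap); lia. Qed.

Let Lt : L t = L s + (t - s) * d s.
Proof. by apply: (block_plen ok_psi Ts lt_st gap); lia. Qed.

Lemma block_period : has_period w (L t) (d s).
Proof. by rewrite -block_pdiff_pred -{1}(prednK t_gt0); apply: has_period_pdiff; lia. Qed.

Lemma block_short_period r : least_pdiff t.-1 ->
  0 < r -> r < d t -> has_period w (L t.+1) r -> has_period w (L t.+1) (d s) /\ d s %| d t.
Proof.
move=> least_pred r_gt0 lt_r per_r.
have le_ds := pdiff_le ok_psi s_gt0; have le_dt := pdiff_le ok_psi t_gt0.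
have lt_Lt := plen_lt ok_psi t_gt0 (ltnSn t).
have le_ts : d s <= (t - s) * d s by apply: leq_pmull; lia.
apply: (least_period_dvd_short (n := L t) (has_period_pdiff t_gt0) per_r) => //.
- by rewrite /pdiff in le_dt *; lia.
- exact: ltnW.
- exact: block_period.
- by move=> q q_gt0 lt_q; rewrite -{1}(prednK t_gt0); apply: least_pred; rewrite ?block_pdiff_pred.
- exact: pdiff_gt0.
- by rewrite Lt; lia.
Qed.

Lemma reduced_pair_of_least : inT psi t -> least_pdiff t -> reduced_pair psi s t.
Proof.
move=> Tt least_t; have ds_gt0 := pdiff_gt0 ok_psi s_gt0.
have no_multiple c n : d t = c * d s -> 2 <= c ->
    has_period w n (d s) -> d t <= n <= L t.+1 -> False.
  move=> dt c_ge2 per_n n_range; apply: (least_pdiff_no_divisor_period t_gt0 least_t per_n) => //.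
  - by rewrite dt; apply: ltn_Pmull.
  - by rewrite dt dvdn_mull.
have [c def_c] : exists c, t - s = c.+1 by exists (t - s).-1; lia.
have Lt_c : L t = L s + d s + c * d s by rewrite Lt def_c mulSn addnA.
rewrite /reduced_pair; case psi_t: (psi t) => [a | m].
  split; last by left; exists a.
  move=> /esym psi_s.
  have ds : d s = (L s).+1 by rewrite /pdiff (plen_letter s_gt0 psi_s); lia.
  have Lt1 : L t.+1 = (L t).*2.+1 := plen_letter t_gt0 psi_t.
  have dt : d t = (L t).+1 by rewrite /pdiff Lt1; lia.
  have [wLs _] := word_letter s_gt0 psi_s; have [wLt _] := word_letter t_gt0 psi_t.
  apply: (no_multiple c.+2 (L t).+1) => //.
  - by rewrite dt Lt_c !mulSn ds; lia.
  - apply: has_period_snoc block_period; first by rewrite Lt_c; lia.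
    have -> : L t - d s = L s + c * d s by rewrite Lt_c; lia.
    by rewrite wLt -(has_period_mul block_period) // Lt_c; lia.
  - by rewrite dt Lt1; lia.
have [m_gt0 m_le] := inT_inr Tt psi_t.
have dt : d t = L t - L m by rewrite /pdiff (plen_rep t_gt0 psi_t); lia.
have dt_le : d t <= L t <= L t.+1 by rewrite dt leq_subr; apply/ltnW/(plen_lt ok_psi).
have [lt_ms | ge_ms] := ltnP m s.
  split; last by right; exists m.
  move=> /esym psi_s; have Ls := plen_rep s_gt0 psi_s (ltac:(lia) : 1 <= m <= s).
  have lt_Lm := plen_lt ok_psi m_gt0 lt_ms.
  have ds : d s = L s - L m by rewrite /pdiff Ls; lia.
  apply: (no_multiple c.+2 (L t) _ _ block_period dt_le) => //.
  by rewrite dt Lt_c !mulSn ds; lia.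
have Lm := block_plen ok_psi Ts lt_st gap (ltac:(lia) : s <= m <= t).
exfalso; apply: (no_multiple ((t - s) - (m - s)) (L t) _ _ block_period dt_le); last by lia.
by rewrite mulnBl dt Lm Lt; lia.
Qed.

Lemma least_of_reduced_pair : inT psi t -> least_pdiff t.-1 -> least_pdiff s ->
  reduced_pair psi s t -> least_pdiff t.
Proof.
move=> Tt least_pred least_s [psi_ne psi_t_cases] r r_gt0 lt_r per_r.
have [per_ds dvd_ds] := block_short_period least_pred r_gt0 lt_r per_r.
have ds_gt0 := pdiff_gt0 ok_psi s_gt0.
have dvd_offset x : d t = x + (t - s) * d s -> d s %| x.
  by move=> dt; move: dvd_ds; rewrite dt dvdn_addl // dvdn_mull.
case: psi_t_cases => [[a psi_t] | [m [psi_t lt_ms]]].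
  have dt : d t = (L t).+1 by rewrite /pdiff (plen_letter t_gt0 psi_t); lia.
  have dvd_Ls : d s %| (L s).+1 by apply: dvd_offset; rewrite dt Lt; lia.
  case psi_s: (psi s) psi_ne => [a' | m'] psi_ne.
    have [wLs _] := word_letter s_gt0 psi_s; have [wLt _] := word_letter t_gt0 psi_t.
    apply: psi_ne; rewrite psi_t -wLt -wLs Lt -(has_period_mul per_ds) //.
    by have := plen_lt ok_psi t_gt0 (ltnSn t); rewrite Lt.
  have [m'_gt0 m'_le] := inT_inr Ts psi_s.
  have Ls := plen_rep s_gt0 psi_s (ltac:(lia) : 1 <= m' <= s).
  have := dvdn_lt_double (ltn0Sn _) dvd_Ls (least_pdiff_rep Ts psi_s least_s).
  by rewrite /pdiff Ls; lia.
have [m_gt0 m_le] := inT_inr Tt psi_t.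
have lt_Lm := plen_lt ok_psi m_gt0 lt_ms.
have dt : d t = L t - L m by rewrite /pdiff (plen_rep t_gt0 psi_t); lia.
have dvd_Ls : d s %| L s - L m by apply: dvd_offset; rewrite dt Lt; lia.
case psi_s: (psi s) psi_ne => [a' | m'] psi_ne.
  have := dvdn_leq (ltac:(lia) : 0 < L s - L m) dvd_Ls.
  by rewrite /pdiff (plen_letter s_gt0 psi_s); lia.
have [m'_gt0 m'_le] := inT_inr Ts psi_s.
have Ls := plen_rep s_gt0 psi_s (ltac:(lia) : 1 <= m' <= s).
have := dvdn_lt_double (ltac:(lia) : 0 < L s - L m) dvd_Ls.
have := least_pdiff_rep Ts psi_s least_s; rewrite /pdiff Ls => short eq_ds.
have eq_m : m = m' by apply: (plen_inj ok_psi) => //; lia.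
by apply: psi_ne; rewrite psi_t eq_m.
Qed.

End BlockPeriods.

Lemma least_pdiff_of_reduced : reduced psi -> forall t, 1 <= t -> least_pdiff t.
Proof.
move=> red; elim/ltn_ind=> t IHt t_gt0.
have [t_lt2 | t_ge2] := ltnP t 2.
  by rewrite (_ : t = 1); [exact: least_pdiff1 | lia].
case: (inT_dec psi t) => [Tt | notTt].
  have [s [Ts lt_st gap]] := inT_pred ok_psi t_ge2; have s_gt0 : 1 <= s by case: Ts.
  apply: (least_of_reduced_pair Ts lt_st gap Tt); try (apply: IHt; lia).
  exact: red.
by apply: (least_pdiff_pred t_ge2 (psi_notinT ok_psi t_ge2 notTt)); apply: IHt; lia.
Qed.

Lemma reduced_of_least_pdiff : (forall t, 1 <= t -> least_pdiff t) -> reduced psi.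
Proof.
move=> least s t Ts Tt lt_st gap.
by apply: (reduced_pair_of_least Ts lt_st gap Tt); apply: least; lia.
Qed.

End Word.

Unset Implicit Arguments.

Theorem theorem4p12 (A : Type) (psi : nat -> A + nat) (w : nat -> A) :
  psi_ok psi ->
  (* w is w_psi: the infinite word having all pi_i (i >= 1) as prefixes *)
  (forall i, 1 <= i -> prefix_of (palpi psi i) w) ->
  (reduced psi <->
   (forall u : seq A, (palindrome u /\ prefix_of u w) <-> exists2 i, 1 <= i & u = palpi psi i)).
Proof.
move=> ok_psi pi_prefix.
apply: iff_trans (iff_sym (pal_prefixes_least ok_psi pi_prefix)).
by split; [apply: least_pdiff_of_reduced | apply: reduced_of_least_pdiff].
Qed.
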